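(* Let $k\ge1$ and let $\psi:\mathbb{Z}^k\to\mathbb{Z}^k$ be an automorphism. (i) If some nonzero $r\in\mathbb{Z}^k$ has $\psi$-orbit of cardinality $c$ (finite or infinite), then there exist infinitely many distinct $\psi$-orbits of cardinality $c$. (ii) If $R(\psi)<\infty$, then $0$ is the only fixed point of $\psi$, i.e. there is a unique one-point orbit.
   Context: For an automorphism $\psi$ of an abelian group $G$, $R(\psi)$ is the number of Reidemeister classes, i.e. classes of the relation $g\sim g+h-\psi(h)$, $h\in G$. *)

From HB Require Import structures.
From mathcomp Require Import all_boot all_order all_algebra.
From mathcomp Require Import boolp classical_sets cardinality.
Set Implicit Arguments. Unset Strict Implicit. Unset Printing Implicit Defensive.
Import GRing.Theory.
Local Open Scope ring_scope.
Local Open Scope classical_set_scope.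

Notation Zk k := 'rV[int]_k.

Definition is_aut (k : nat) (psi : Zk k -> Zk k) : Prop :=
  (forall x y, psi (x + y) = psi x + psi y) /\ bijective psi.

(* The psi-orbit of r: { psi^n r | n in Z }, i.e. x with psi^n r = x or psi^n x = r. *)
Definition zorbit (k : nat) (psi : Zk k -> Zk k) (r : Zk k) : set (Zk k) :=
  [set x | exists n : nat, iter n psi r = x \/ iter n psi x = r].

Definition orbits (k : nat) (psi : Zk k -> Zk k) : set (set (Zk k)) :=
  [set O | exists r, O = zorbit psi r].

Definition reid_class (k : nat) (psi : Zk k -> Zk k) (g : Zk k) : set (Zk k) :=
  [set x | exists h, x = g + h - psi h].

Definition reid_classes (k : nat) (psi : Zk k -> Zk k) : set (set (Zk k)) :=
  [set C | exists g, C = reid_class psi g].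

Definition reid_finite (k : nat) (psi : Zk k -> Zk k) : Prop :=
  finite_set (reid_classes psi).

From HB Require Import structures.
From mathcomp Require Import all_boot all_order all_algebra.
From mathcomp Require Import boolp classical_sets cardinality.
Set Implicit Arguments. Unset Strict Implicit. Unset Printing Implicit Defensive.
Import Order.TTheory GRing.Theory Num.Theory.
Local Open Scope ring_scope.
Local Open Scope classical_set_scope.

(* (i) For r <> 0 the orbits of r, 2r, 4r, ... all have the cardinality of the
   orbit of r, as x |-> 2^j x maps the orbit of r bijectively onto that of 2^j r.
   They are pairwise distinct: if 2^j r were in the orbit of 2^i r with i < j,
   then r = c psi^n r or r = c psi^-n r with c = 2^(j-i) > 1, and iterating
   r = c f(r) shows that every entry of r is divisible by every power of c.
   (ii) Writing psi x = x A, a nonzero fixed point makes 1 - A singular;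
   clearing denominators in a rational kernel vector of (1 - A)^T gives a
   nonzero integer column w with (1 - A) w = 0. Then h |-> h w is constant on
   Reidemeister classes and takes infinitely many values, so R(psi) is infinite. *)

Lemma iter_morph T (f : T -> T) (op : T -> T -> T) :
  {morph f : x y / op x y} -> forall n, {morph iter n f : x y / op x y}.
Proof. by move=> fop; elim=> [|n IHn] x y //=; rewrite IHn fop. Qed.

Lemma iter_can T (f g : T -> T) : cancel f g -> forall n, cancel (iter n f) (iter n g).
Proof. by move=> fK; elim=> [|n IHn] x //; rewrite iterSr iterS fK IHn. Qed.

Section AdditiveMaps.
Variables (U V : zmodType) (f : U -> V).
Hypothesis fD : {morph f : x y / x + y}.

Lemma morphD_0 : f 0 = 0.
Proof. by apply: (@addrI _ (f 0)); rewrite -fD !addr0. Qed.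

Lemma morphD_Mn x m : f (x *+ m) = f x *+ m.
Proof. by elim: m => [|m IHm]; rewrite ?morphD_0 // !mulrS fD IHm. Qed.

End AdditiveMaps.

Lemma dvdz_expn_eq0 (c : nat) (z : int) :
  (1 < c)%N -> (forall t, ((c ^ t)%:Z %| z)%Z) -> z = 0.
Proof.
move=> c_gt1 dvd_z; apply/eqP; apply: contraT => z_neq0.
have := dvdn_leq _ (dvd_z `|z|%N); rewrite absz_gt0 => /(_ z_neq0).
by rewrite leqNgt ltn_expl.
Qed.

Section IntegerRows.
Variable k : nat.
Implicit Types (x y r : 'rV[int]_k).

Lemma natmul_rowI m : (0 < m)%N -> injective (fun x : 'rV[int]_k => x *+ m).
Proof.
move=> m_gt0 x y /= /rowP xy; apply/rowP => j; have := xy j.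
by rewrite !mulmxnE => /eqP; rewrite eqr_pMn2r // => /eqP.
Qed.

Lemma natmul_fixpoint_eq0 (f : 'rV[int]_k -> 'rV[int]_k) c r :
  {morph f : x y / x + y} -> (1 < c)%N -> r = f r *+ c -> r = 0.
Proof.
move=> fD c_gt1 r_fix.
have r_iter t : r = iter t f r *+ (c ^ t).
  elim: t => [|t IHt]; first by rewrite expn0 mulr1n.
  by rewrite {1}IHt {1}r_fix (morphD_Mn (iter_morph fD t)) -iterSr -mulrnA -expnS.
apply/rowP => j; rewrite mxE; apply: (dvdz_expn_eq0 c_gt1) => t.
by rewrite (r_iter t) mulmxnE -mulr_natr natz dvdz_mull.
Qed.

Lemma additive_mulmx (f : 'rV[int]_k -> 'rV[int]_k) :
  {morph f : x y / x + y} -> {A : 'M[int]_k | forall x, f x = x *m A}.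
Proof.
move=> fD; pose fA : {additive _ -> _} :=
  HB.pack f (GRing.isNmodMorphism.Build _ _ f (morphD_0 fD, fD)).
exists (\matrix_i f (delta_mx 0 i)) => x.
rewrite -[f]/(fA : _ -> _) {1}(row_sum_delta x) raddf_sum mulmx_sum_row.
by apply: eq_bigr => j _; rewrite rowK -[x 0 j]intz !scaler_int raddfMz.
Qed.

End IntegerRows.

Lemma infinite_set_inj T (S : set T) (f : nat -> T) :
  injective f -> (forall n, S (f n)) -> infinite_set S.
Proof.
move=> f_inj Sf; apply: (@sub_infinite_set _ (f @` setT)); first by move=> _ [n _ <-].
rewrite (eq_finite_set (inj_card_eq _)); first exact: infinite_nat.
by move=> m n _ _; apply: f_inj.
Qed.

Section Orbits.
Variables (k : nat) (psi phi : 'rV[int]_k -> 'rV[int]_k).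
Hypotheses (psiD : {morph psi : x y / x + y}) (psiK : cancel psi phi) (phiK : cancel phi psi).

Let phiD : {morph phi : x y / x + y}.
Proof. by move=> x y; apply: (can_inj psiK); rewrite psiD !phiK. Qed.

Implicit Types r x y : 'rV[int]_k.

Lemma zorbit_refl r : zorbit psi r r.
Proof. by exists 0%N; left. Qed.

Lemma zorbitMn r m : zorbit psi (r *+ m) = (fun x => x *+ m) @` zorbit psi r.
Proof.
apply/seteqP; split=> x.
- case=> n [<-|psi_x]; have psinMn := morphD_Mn (iter_morph psiD n).
    by exists (iter n psi r); [exists n; left | rewrite psinMn].
  exists (iter n phi r); first by exists n; right; rewrite iter_can.
  by apply: (can_inj (iter_can psiK n)); rewrite psinMn iter_can.
- case=> y [n [<-|psi_y]] <-; exists n; rewrite !(morphD_Mn (iter_morph psiD n)).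
    by left.
  by right; rewrite psi_y.
Qed.

Lemma card_zorbitMn r m : (0 < m)%N -> (zorbit psi (r *+ m) #= zorbit psi r)%card.
Proof.
move=> m_gt0; rewrite zorbitMn; apply: inj_card_eq => x y _ _.
exact: natmul_rowI.
Qed.

Lemma zorbit_expn2_neq r i j : r != 0 -> (i < j)%N ->
  zorbit psi (r *+ 2 ^ i) <> zorbit psi (r *+ 2 ^ j).
Proof.
move=> /eqP r_neq0 lt_ij eq_orb; pose c := (2 ^ (j - i))%N.
have c_gt1 : (1 < c)%N by rewrite /c -{1}(expn0 2) ltn_exp2l // subn_gt0.
have : zorbit psi (r *+ 2 ^ i) (r *+ c *+ 2 ^ i).
  rewrite -mulrnA /c -expnD subnK 1?ltnW // eq_orb; exact: zorbit_refl.
have pow_gt0 : (0 < 2 ^ i)%N by rewrite expn_gt0.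
rewrite zorbitMn => -[y [n orb_y] /(natmul_rowI pow_gt0) y_eq].
apply: r_neq0; rewrite y_eq in orb_y; case: orb_y => [psi_r | psi_rc].
- apply: (natmul_fixpoint_eq0 (iter_morph phiD n) c_gt1).
  by rewrite -(morphD_Mn (iter_morph phiD n)) -psi_r iter_can.
- apply: (natmul_fixpoint_eq0 (iter_morph psiD n) c_gt1).
  by rewrite -(morphD_Mn (iter_morph psiD n)).
Qed.

Lemma zorbit_card_infinite r : r != 0 ->
  infinite_set [set O | orbits psi O /\ (O #= zorbit psi r)%card].
Proof.
move=> r_neq0; apply: (@infinite_set_inj _ _ (fun j => zorbit psi (r *+ 2 ^ j))).
  move=> i j eq_orb; case: (ltngtP i j) => // lt_ij.
    by case: (zorbit_expn2_neq r_neq0 lt_ij eq_orb).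
  by case: (zorbit_expn2_neq r_neq0 lt_ij (esym eq_orb)).
by move=> j; split; [exists (r *+ 2 ^ j) | apply: card_zorbitMn; rewrite expn_gt0].
Qed.

Lemma zorbit0 : zorbit psi 0 = [set 0].
Proof.
apply/seteqP; split=> [x [n [<-|psi_x]]|_ ->]; last exact: zorbit_refl.
  by rewrite /= (morphD_0 (iter_morph psiD n)).
by rewrite /= -(iter_can psiK n x) psi_x (morphD_0 (iter_morph phiD n)).
Qed.

Lemma singleton_zorbits : (forall x, psi x = x -> x = 0) ->
  orbits psi `&` [set O | exists x, O = [set x]] = [set [set 0]].
Proof.
move=> fix0; apply/seteqP; split=> [O [[r ->] [x orb_r]]|O ->] /=; last first.
  by split; [exists 0; rewrite zorbit0 | exists 0].
have r_x : r = x by have := zorbit_refl r; rewrite orb_r.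
have : zorbit psi r (psi r) by exists 1%N; left.
by rewrite orb_r -r_x => /fix0 ->.
Qed.

End Orbits.

Lemma map_mx_intr_eq0 m n (A : 'M[int]_(m, n)) :
  (map_mx (intr : int -> rat) A == 0) = (A == 0).
Proof.
apply/eqP/eqP => [/matrixP A0|->]; last exact: map_mx0.
by apply/matrixP => i j; have /eqP := A0 i j; rewrite !mxE intr_eq0 => /eqP.
Qed.

Lemma rat_mx_scale_int m n (A : 'M[rat]_(m, n)) :
  exists2 d : int, d != 0 & exists B : 'M[int]_(m, n), map_mx intr B = d%:~R *: A.
Proof.
pose d := \prod_ij denq (A ij.1 ij.2).
exists d; first by apply/prodf_neq0 => ij _; apply: denq_neq0.
exists (map_mx numq (d%:~R *: A)); apply/matrixP => i j.
rewrite !mxE mulrC [d](bigD1 (i, j)) //= rmorphM mulrA.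
by rewrite -numqE -rmorphM numq_int.
Qed.

Lemma det0_intP n (M : 'M[int]_n) :
  reflect (exists2 v : 'rV[int]_n, v != 0 & v *m M = 0) (\det M == 0).
Proof.
pose Mq := map_mx (intr : int -> rat) M.
have <- : (\det Mq == 0) = (\det M == 0) by rewrite det_map_mx intr_eq0.
apply: (iffP det0P) => [[u u_neq0 uM] | [v v_neq0 vM]].
  have [d d_neq0 [v v_du]] := rat_mx_scale_int u.
  exists v; first by rewrite -map_mx_intr_eq0 v_du scalemx_eq0 intr_eq0 negb_or d_neq0.
  by apply/eqP; rewrite -map_mx_intr_eq0 map_mxM v_du -scalemxAl uM scaler0.
exists (map_mx intr v); first by rewrite map_mx_intr_eq0.
by rewrite -map_mxM vM map_mx0.
Qed.

Section ReidemeisterClasses.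
Variables (k : nat) (psi : 'rV[int]_k -> 'rV[int]_k).
Hypothesis psiD : {morph psi : x y / x + y}.

Lemma reid_class_refl g : reid_class psi g g.
Proof. by exists 0; rewrite (morphD_0 psiD) subr0 addr0. Qed.

Lemma reid_classes_infinite (w : 'cV[int]_k) (x : 'rV[int]_k) :
  (forall h, (h - psi h) *m w = 0) -> (x *m w) 0 0 != 0 ->
  infinite_set (reid_classes psi).
Proof.
move=> w_ker xw_neq0.
apply: (@infinite_set_inj _ _ (fun t => reid_class psi (x *+ t))); last first.
  by move=> t; exists (x *+ t).
move=> s t eq_cl; apply: (mulrIn xw_neq0).
have : reid_class psi (x *+ t) (x *+ s) by rewrite -eq_cl; apply: reid_class_refl.
case=> h /(congr1 (fun y => (y *m w) 0 0)).
have mulwD : {morph (fun y : 'rV[int]_k => y *m w) : y z / y + z}.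
  by move=> y z; rewrite mulmxDl.
by rewrite -addrA mulwD w_ker addr0 !(morphD_Mn mulwD) !mulmxnE.
Qed.

Lemma reid_finite_fixpoint_eq0 : reid_finite psi -> forall x, psi x = x -> x = 0.
Proof.
move=> fin x psi_x; apply/eqP; apply: (contraPT _ fin) => x_neq0.
have [A psiA] := additive_mulmx psiD.
pose M := 1%:M - A.
have idBpsi h : h - psi h = h *m M by rewrite mulmxBr mulmx1 psiA.
have /det0_intP[v v_neq0 vMT] : \det M^T == 0.
  by rewrite det_tr; apply/det0_intP; exists x; rewrite // -idBpsi psi_x subrr.
have [i [j vj_neq0]] := matrix0Pn _ v_neq0.
apply: (@reid_classes_infinite v^T (delta_mx 0 j)).
  by move=> h; rewrite idBpsi -mulmxA -[M]trmxK -trmx_mul vMT trmx0 mulmx0.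
by rewrite -rowE !mxE [i]ord1 in vj_neq0 *.
Qed.

End ReidemeisterClasses.

Theorem lemma3p3 (k : nat) (psi : 'rV[int]_k -> 'rV[int]_k) :
  (0 < k)%N -> is_aut psi ->
  (forall r : 'rV[int]_k, r != 0 ->
     infinite_set [set O | orbits psi O /\ (O #= zorbit psi r)%card])
  /\
  (reid_finite psi -> (forall x : 'rV[int]_k, psi x = x -> x = 0) /\
     orbits psi `&` [set O | exists x, O = [set x]] = [set [set 0]]).
Proof.
move=> _ [psiD [phi psiK phiK]]; split=> [r|fin]; first exact: zorbit_card_infinite.
have fix0 := reid_finite_fixpoint_eq0 psiD fin.
by split=> //; apply: singleton_zorbits.
Qed.
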